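(* Let $\theta$ be a linear operator on $\Lambda$ that is shift-invariant, i.e. $E^a\theta=\theta E^a$ for all $a\in\mathbb C$. Then $$\theta=\sum_{\lambda\in\mathcal P}\big(\epsilon\,\theta\, m_\lambda(\mathbf y)\big)\,\mathbf D_\lambda,$$ meaning that $\theta p=\sum_{\lambda}(\epsilon\,\theta\, m_\lambda)\,\mathbf D_\lambda p$ for all $p\in\Lambda$.
   Context: $\Lambda$ is the algebra of complex symmetric functions in $\mathbf y=(y_1,y_2,\dots)$. $\mathcal P$ is the set of all partitions and $m_\lambda$ is the monomial symmetric function. $\mathbf D_i$ ($i\ge1$) is the linear operator with $\mathbf D_im_\lambda=i!\,m_{\lambda\setminus i}$ if $i$ is a part of $\lambda$ (one part $i$ removed), and $0$ otherwise. $\mathbf D_\lambda=\prod_{i:\lambda_i>0}\mathbf D_{\lambda_i}/\lambda_i!$, with $\mathbf D_\emptyset$ the identity. These operators commute. $E^ap(y_1,\dots)=p(a,y_1,\dots)$ and $\epsilon p=p(0,0,\dots)$. The sum acts finitely on each $p$. *)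

From mathcomp Require Import all_boot all_algebra.
From mathcomp Require Import mpoly.
From mathcomp Require Import complex.
From mathcomp Require Import Rstruct.

Set Implicit Arguments.
Unset Strict Implicit.
Unset Printing Implicit Defensive.
Import GRing.Theory.
Local Open Scope ring_scope.

Definition CC : fieldType := (Rdefinitions.R)[i].

(* A symmetric function in y = (y_1, y_2, ...) is represented, as usual, by
   the compatible family of its restrictions p_n = p(y_1,...,y_n,0,0,...) in
   {mpoly CC[n]}.  [fam] is the type of raw families; [isSym] carves out Λ. *)
Definition fam := forall n : nat, {mpoly CC[n]}.

Definition drop_last (n : nat) (q : {mpoly CC[n.+1]}) : {mpoly CC[n]} :=
  q \mPo [tuple (if unlift ord_max i is Some j then 'X_j else 0) | i < n.+1].

Definition famD (p q : fam) : fam := fun n => p n + q n.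
Definition famZ (c : CC) (p : fam) : fam := fun n => c *: p n.
Definition fam0 : fam := fun n => 0.

Definition isSym (p : fam) : Prop :=
  [/\ forall n, p n \is symmetric,
      forall n, drop_last (p n.+1) = p n
    & exists d : nat, forall n (m : 'X_{1..n}), m \in msupp (p n) -> (mdeg m <= d)%N].

Definition deg_le (p : fam) (d : nat) : Prop :=
  forall n (m : 'X_{1..n}), m \in msupp (p n) -> (mdeg m <= d)%N.

(* E^a p (y_1, y_2, ...) = p(a, y_1, y_2, ...) *)
Definition shiftE (a : CC) (p : fam) : fam := fun n =>
  p n.+1 \mPo [tuple (if unlift ord0 i is Some j then 'X_j else a%:MP) | i < n.+1].

Definition epsilon (p : fam) : CC := (p 0%N).@[fun _ => 0].

(* Partitions are represented as nonincreasing sequences of positive parts.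
   The partition (shape) of a monomial: its nonzero exponents, sorted. *)
Definition mpart (n : nat) (m : 'X_{1..n}) : seq nat :=
  sort geq [seq m i | i <- enum 'I_n & (m i != 0)%N].

Definition monomial_sym (la : seq nat) : fam := fun n =>
  \sum_(m : 'X_{1..n < (sumn la).+1} | mpart m == la) 'X_[bmnm m].

Definition mpad (n : nat) (la : seq nat) : 'X_{1..n} :=
  [multinom nth 0%N la i | i < n].

(* D_i : D_i m_λ = i! m_{λ \ i} if i is a part of λ, 0 otherwise, extended
   linearly.  On the n-th component: expand p_{n+1} in the monomial basis
   p_{n+1} = Σ_λ c_λ m_λ (c_λ = coefficient of y^λ) and apply the rule. *)
Definition Dop (i : nat) (p : fam) : fam := fun n =>
  \sum_(la <- undup [seq mpart m | m <- msupp (p n.+1)])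
     (p n.+1)@_(mpad n.+1 la) *:
        (if i \in la then (i`!)%:R *: monomial_sym (rem i la) n else 0).

Definition Dpart (la : seq nat) (p : fam) : fam :=
  foldr (fun k q => famZ ((k`!)%:R)^-1 (Dop k q)) p la.

Definition partitions_upto (N : nat) : seq (seq nat) :=
  undup [seq mpart (bmnm m) | m : 'X_{1..N < N.+1}].

From mathcomp Require Import all_boot all_algebra.
From mathcomp Require Import perm mpoly complex Rstruct.
From mathcomp Require Import ring.
From Stdlib Require Import FunctionalExtensionality.
Import GRing.Theory Num.Theory.
Local Open Scope ring_scope.
Set Implicit Arguments.
Unset Strict Implicit.
Unset Printing Implicit Defensive.

(* Write c_la(p) = [part_coef p la] for the coefficient of y^la, i.e. of m_la,
   in a symmetric function p; then c_mu(D_nu p) = c_(nu U mu)(p).  On functions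
   of degree at most K, Taylor's formula E^a = 1 + sum_(k <= K) a^k/k! D_k holds,
   so shift invariance turns every coefficient of theta D_k q - D_k theta q into
   the coefficient of a polynomial in a vanishing at every a: theta commutes with
   the D_k.  Hence, by linearity of epsilon theta,
     c_nu(theta p) = epsilon (D_nu theta p) = epsilon (theta D_nu p)
                   = sum_la c_la(D_nu p) epsilon (theta m_la)
                   = sum_la epsilon (theta m_la) c_nu(D_la p). *)

(** * Partitions *)

Lemma geq_total : total geq.
Proof. by move=> m n; rewrite /= orbC leq_total. Qed.

Lemma geq_trans : transitive geq.
Proof. by move=> n m p /= le_nm le_pn; apply: leq_trans le_pn le_nm. Qed.

Lemma geq_anti : antisymmetric geq.
Proof. by move=> m n /=; rewrite andbC => /anti_leq. Qed.

Definition is_part (la : seq nat) := sorted geq la && all (fun k => 0 < k)%N la.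

Definition part_union (la mu : seq nat) := sort geq (la ++ mu).

Lemma sort_geq_perm (s1 s2 : seq nat) : perm_eq s1 s2 -> sort geq s1 = sort geq s2.
Proof. exact/(perm_sortP geq_total geq_trans geq_anti). Qed.

Lemma perm_sort_geq (s : seq nat) : perm_eq (sort geq s) s.
Proof. exact/permEl/perm_sort. Qed.

Lemma sort_geq_part la : is_part la -> sort geq la = la.
Proof. by case/andP=> /(sorted_sort geq_trans). Qed.

Lemma is_part_sort (s : seq nat) : all (fun k => 0 < k)%N s -> is_part (sort geq s).
Proof. by move=> s_pos; rewrite /is_part sort_sorted ?all_sort //; apply: geq_total. Qed.

Lemma is_part_union la mu :
  all (fun k => 0 < k)%N la -> all (fun k => 0 < k)%N mu -> is_part (part_union la mu).
Proof. by move=> la_pos mu_pos; rewrite is_part_sort // all_cat la_pos. Qed.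

Lemma part_union0s la : is_part la -> part_union [::] la = la.
Proof. exact: sort_geq_part. Qed.

Lemma part_unionC la mu : part_union la mu = part_union mu la.
Proof. by apply: sort_geq_perm; rewrite perm_catC. Qed.

Lemma part_union_cat la mu nu :
  part_union la (part_union mu nu) = part_union (mu ++ la) nu.
Proof.
apply: sort_geq_perm; rewrite -catA perm_sym perm_catCA perm_cat2l perm_sym.
exact: perm_sort_geq.
Qed.

Lemma sumn_part_union la mu : sumn (part_union la mu) = (sumn la + sumn mu)%N.
Proof. by rewrite (perm_sumn (perm_sort_geq _)) sumn_cat. Qed.

Lemma size_part_union la mu : size (part_union la mu) = (size la + size mu)%N.
Proof. by rewrite size_sort size_cat. Qed.

Lemma size_part_le_sumn la : is_part la -> (size la <= sumn la)%N.
Proof.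
case/andP=> _; elim: la => //= k la IH /andP[k_pos /IH].
by rewrite -add1n; apply: leq_add.
Qed.

Lemma part_union1_rem k la mu : is_part la -> sorted geq mu ->
  ((k \in la) && (mu == rem k la)) = (la == part_union [:: k] mu).
Proof.
move=> /andP[la_sorted _] mu_sorted.
have union_sorted s : sorted geq (part_union [:: k] s).
  exact: (sort_sorted geq_total).
apply/andP/eqP => [[k_la /eqP ->]|->].
  apply: (sorted_eq geq_trans geq_anti) => //.
  by apply: (perm_trans (perm_to_rem k_la)); rewrite perm_sym perm_sort_geq.
have k_union : k \in part_union [:: k] mu by rewrite mem_sort mem_head.
split => //; apply/eqP/(sorted_eq geq_trans geq_anti) => //.
  by apply: subseq_sorted geq_trans _ _ (rem_subseq _ _) (union_sorted mu).
rewrite -(perm_cons k) perm_sym -(permPl (perm_to_rem k_union)).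
exact: perm_sort_geq.
Qed.

(** * Monomials and substitutions *)

Lemma mpartE n (m : 'X_{1..n}) : mpart m = sort geq [seq k <- m | k != 0%N].
Proof.
rewrite /mpart; congr sort.
by rewrite -[in RHS](map_tnth_enum (multinom_val m)) [in RHS]filter_map.
Qed.

Lemma is_part_mpart n (m : 'X_{1..n}) : is_part (mpart m).
Proof.
rewrite mpartE; apply: is_part_sort; apply/allP => k.
by rewrite mem_filter lt0n => /andP[].
Qed.

Lemma sumn_mpart n (m : 'X_{1..n}) : sumn (mpart m) = mdeg m.
Proof.
rewrite mpartE (perm_sumn (perm_sort_geq _)) /mdeg sumnE big_filter big_mkcond.
by apply: eq_bigr => i _; case: eqP.
Qed.

Lemma size_mpart n (m : 'X_{1..n}) : (size (mpart m) <= n)%N.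
Proof. by rewrite mpartE size_sort size_filter -[X in (_ <= X)%N](size_tuple m) count_size. Qed.

Lemma mpart_perm n1 n2 (m1 : 'X_{1..n1}) (m2 : 'X_{1..n2}) :
  perm_eq [seq k <- m1 | k != 0%N] [seq k <- m2 | k != 0%N] -> mpart m1 = mpart m2.
Proof. by rewrite !mpartE => /sort_geq_perm. Qed.

Lemma mpart_msym n (m : 'X_{1..n}) (s : 'S_n) : mpart [multinom m (s i) | i < n] = mpart m.
Proof. by apply/mpart_perm/perm_filter/tuple_permP; exists s. Qed.

Lemma mpart_mnmwiden n (m : 'X_{1..n}) : mpart (mnmwiden m) = mpart m.
Proof. by apply/mpart_perm; rewrite filter_rcons. Qed.

Definition mnm_cons n (k : nat) (m : 'X_{1..n}) : 'X_{1..n.+1} := [multinom of k :: m].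

Lemma mpart_mnm_cons n k (m : 'X_{1..n}) :
  mpart (mnm_cons k m) = if k == 0%N then mpart m else part_union [:: k] (mpart m).
Proof.
rewrite !mpartE /=; case: eqP => //= _.
by apply: sort_geq_perm; rewrite perm_cons perm_sym perm_sort_geq.
Qed.

Lemma mpad_val n la : (size la <= n)%N -> mpad n la = la ++ nseq (n - size la) 0%N :> seq nat.
Proof.
move=> la_n; apply: (@eq_from_nth _ 0%N); first by rewrite size_tuple size_cat size_nseq subnKC.
move=> i; rewrite size_tuple => lt_in.
rewrite -(mnm_nth 0%N (mpad n la) (Ordinal lt_in)) mnmE nth_cat.
by case: ltnP => // le_la_i; rewrite nth_nseq nth_default // if_same.
Qed.

Lemma mpart_mpad n la : is_part la -> (size la <= n)%N -> mpart (mpad n la) = la.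
Proof.
move=> la_part la_n; rewrite mpartE mpad_val // filter_cat filter_nseq /= cats0.
rewrite (@eq_in_filter _ _ predT) ?filter_predT ?sort_geq_part //.
by move=> k; case/andP: la_part => _ /allP la_pos /la_pos; rewrite lt0n.
Qed.

Lemma mdeg_mpad n la : is_part la -> (size la <= n)%N -> mdeg (mpad n la) = sumn la.
Proof. by move=> la_part la_n; rewrite -sumn_mpart mpart_mpad. Qed.

Lemma mnmwiden_mpad n la : (size la <= n)%N -> mnmwiden (mpad n la) = mpad n.+1 la.
Proof.
move=> la_n; apply/val_inj/val_inj; rewrite /= mpad_val // (mpad_val (leqW la_n)).
by rewrite subSn // rcons_cat -cats1 -[[:: 0%N]]/(nseq 1 0%N) -nseqD addn1.
Qed.

Lemma perm_mpad_mpart n (m : 'X_{1..n}) : perm_eq m (mpad n (mpart m)).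
Proof.
rewrite mpad_val ?size_mpart // -(permPl (permEl (perm_filterC (fun k => k != 0%N) m))).
have zeros : [seq k <- m | predC (fun k => k != 0%N) k] = nseq (n - size (mpart m)) 0%N.
  have /all_pred1P -> : all (pred1 0%N) [seq k <- m | predC (fun k => k != 0%N) k].
    by apply/allP => k; rewrite mem_filter /= negbK => /andP[].
  rewrite mpartE size_sort !size_filter -[X in (X - _)%N](size_tuple m).
  by rewrite -(count_predC (fun k => k != 0%N)) addKn.
by rewrite zeros perm_cat2r mpartE perm_sym perm_sort_geq.
Qed.

Lemma mcoeff_sym_mpad (R : nzRingType) n (q : {mpoly R[n]}) (m : 'X_{1..n}) :
  q \is symmetric -> q@_m = q@_(mpad n (mpart m)).
Proof.
move=> /issymP q_sym; have /tuple_permP [s m_s] := perm_mpad_mpart m.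
have m_perm : m = [multinom mpad n (mpart m) (s i) | i < n].
  by apply/mnmP => i; rewrite mnmE (mnm_nth 0%N) m_s -tnth_nth tnth_mktuple.
by rewrite {1}m_perm -mcoeff_sym q_sym.
Qed.

Lemma mcoeff_msuppE (R : nzRingType) n (q : {mpoly R[n]}) (x : 'X_{1..n}) :
  q@_x = \sum_(m <- msupp q) q@_m * (m == x)%:R.
Proof.
rewrite {1}(mpolyE q) raddf_sum; apply: eq_bigr => m _.
by rewrite /= mcoeffZ mcoeffX.
Qed.

Lemma lift_max_widen n (i : 'I_n) : lift ord_max i = widen_ord (leqnSn n) i.
Proof. exact/val_inj/lift_max. Qed.

Lemma mcoeff_drop_last n (q : {mpoly CC[n.+1]}) x : (drop_last q)@_x = q@_(mnmwiden x).
Proof.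
rewrite /drop_last comp_mpolyEX raddf_sum mcoeff_msuppE; apply: eq_bigr => m _ /=.
rewrite mcoeffZ comp_mpolyX big_ord_recr /= tnth_mktuple unlift_none expr0n.
under eq_bigr => i _ do rewrite tnth_mktuple -lift_max_widen liftK.
have -> : \prod_(i < n) ('X_i : {mpoly CC[n]}) ^+ m (lift ord_max i) =
          'X_[[multinom m (lift ord_max i) | i < n]].
  by rewrite mpolyXE_id; apply: eq_bigr => i _; rewrite mnmE.
congr (_ * _); case: (eqVneq (m ord_max) 0%N) => [m_last|m_last].
  rewrite mulr1 mcoeffX -(inj_eq (@inj_mnmwiden n)); congr ((_ == _)%:R).
  apply/mnmP => i; case: (unliftP ord_max i) => [j ->|->].
    by rewrite lift_max_widen mnmwiden_widen mnmE lift_max_widen.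
  by rewrite mnmwiden_ordmax.
rewrite mulr0 mcoeff0; case: eqP => // m_widen.
by move: m_last; rewrite m_widen mnmwiden_ordmax eqxx.
Qed.

Lemma mnm_cons_eq n (m : 'X_{1..n.+1}) k (x : 'X_{1..n}) :
  (m == mnm_cons k x) = (m ord0 == k) && ([multinom m (lift ord0 i) | i < n] == x).
Proof.
have cons0 y : mnm_cons k y ord0 = k by rewrite (mnm_nth 0%N).
have consS y i : mnm_cons k y (lift ord0 i) = y i by rewrite !(mnm_nth 0%N).
apply/eqP/andP => [->|[/eqP m0 /eqP <-]].
  by split; apply/eqP; [|apply/mnmP => i; rewrite mnmE]; rewrite ?cons0 ?consS.
apply/mnmP => i; case: (unliftP ord0 i) => [j ->|->]; last by rewrite cons0 m0.
by rewrite consS mnmE.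
Qed.

Lemma mcoeff_shiftE (p : fam) a n x K :
  (forall m, m \in msupp (p n.+1) -> (m ord0 < K)%N) ->
  (shiftE a p n)@_x = \sum_(0 <= k < K) a ^+ k * (p n.+1)@_(mnm_cons k x).
Proof.
move=> supp_K; under [RHS]eq_bigr => k _ do rewrite mcoeff_msuppE big_distrr.
rewrite /shiftE comp_mpolyEX raddf_sum exchange_big /=.
apply: eq_big_seq => m /supp_K m0_K /=.
rewrite mcoeffZ comp_mpolyX big_ord_recl /= tnth_mktuple unlift_none.
under eq_bigr => i _ do rewrite tnth_mktuple liftK.
have -> : \prod_(i < n) ('X_i : {mpoly CC[n]}) ^+ m (lift ord0 i) =
          'X_[[multinom m (lift ord0 i) | i < n]].
  by rewrite mpolyXE_id; apply: eq_bigr => i _; rewrite mnmE.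
rewrite -rmorphXn mul_mpolyC mcoeffZ mcoeffX.
under eq_bigr => k _ do rewrite mnm_cons_eq.
rewrite (bigD1_seq (m ord0)) ?mem_index_iota ?iota_uniq //= eqxx big1 ?addr0.
  by rewrite mulrCA.
by move=> k; rewrite eq_sym => /negbTE ->; rewrite mulr0 mulr0.
Qed.

(** * Coefficients of symmetric functions *)

Definition part_coef (p : fam) (la : seq nat) : CC := (p (size la))@_(mpad (size la) la).

Lemma famP (p q : fam) : (forall n m, (p n)@_m = (q n)@_m) -> p = q.
Proof. by move=> pq; apply: functional_extensionality_dep => n; apply/mpolyP. Qed.

Lemma mcoeff_isSym p n (m : 'X_{1..n}) : isSym p -> (p n)@_m = part_coef p (mpart m).
Proof.
case=> p_sym p_drop _; rewrite (mcoeff_sym_mpad _ (p_sym n)).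
have := size_mpart m; move: (mpart m) => la {m}.
elim: n => [|n IH] la_n; first by move: la_n; rewrite leqn0 => /nilP ->.
case: (ltngtP (size la) n.+1) => [lt_la_n||<-] //; last by rewrite ltnNge la_n.
by rewrite -(mnmwiden_mpad lt_la_n) -mcoeff_drop_last p_drop IH.
Qed.

Lemma part_coef_shape p (f : seq nat -> CC) la :
  (forall n m, (p n)@_m = f (mpart m)) -> is_part la -> part_coef p la = f la.
Proof. by move=> p_f la_part; rewrite /part_coef p_f mpart_mpad. Qed.

Lemma isSym_shape p (f : seq nat -> CC) d :
  (forall n m, (p n)@_m = f (mpart m)) ->
  (forall la, is_part la -> f la != 0 -> (sumn la <= d)%N) -> isSym p /\ deg_le p d.
Proof.
move=> p_f f_deg; have p_deg : deg_le p d.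
  move=> n m; rewrite mcoeff_msupp p_f -sumn_mpart.
  exact/f_deg/is_part_mpart.
split=> //; split; last by exists d.
  by move=> n; apply/issymP => s; apply/mpolyP => m; rewrite mcoeff_sym !p_f mpart_msym.
by move=> n; apply/mpolyP => m; rewrite mcoeff_drop_last !p_f mpart_mnmwiden.
Qed.

Lemma part_coef_deg p d la : deg_le p d -> is_part la -> part_coef p la != 0 -> (sumn la <= d)%N.
Proof. by move=> p_deg la_part; rewrite -mcoeff_msupp => /p_deg; rewrite mdeg_mpad. Qed.

Lemma part_coef_union_deg p d la mu : deg_le p d -> all (fun k => 0 < k)%N la -> is_part mu ->
  part_coef p (part_union la mu) != 0 -> (sumn mu <= d)%N.
Proof.
move=> p_deg la_pos /andP[_ mu_pos] /(part_coef_deg p_deg (is_part_union la_pos mu_pos)).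
by rewrite sumn_part_union; apply: leq_trans; rewrite leq_addl.
Qed.

Lemma epsilon_part_coef p : epsilon p = part_coef p [::].
Proof.
rewrite /epsilon /part_coef mevalE mcoeff_msuppE; apply: eq_bigr => m _.
by rewrite big_ord0 (_ : m = mpad 0 [::]) ?eqxx //; apply/mnmP => -[].
Qed.

(** * The operators m_la, D_k and D_la *)

Lemma mcoeff_monomial_sym la n (m : 'X_{1..n}) : (monomial_sym la n)@_m = (mpart m == la)%:R.
Proof.
rewrite /monomial_sym raddf_sum /=; under eq_bigr => b _ do rewrite mcoeffX.
have [m_la|m_la] := eqVneq (mpart m) la; last first.
  by rewrite big1 // => b /eqP b_la; case: eqP => // b_m; rewrite -b_m b_la eqxx in m_la.
have m_bound : (mdeg m < (sumn la).+1)%N by rewrite -m_la sumn_mpart.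
rewrite (bigD1 (BMultinom m_bound)) /= ?m_la ?eqxx // big1 ?addr0 // => b /andP[_ b_m].
by case: eqP => // bm; rewrite -(inj_eq val_inj) /= bm eqxx in b_m.
Qed.

Lemma isSym_monomial_sym la : isSym (monomial_sym la).
Proof.
have coef n m : (monomial_sym la n)@_m = (mpart m == la)%:R := mcoeff_monomial_sym la m.
apply: (proj1 (isSym_shape (f := fun mu => (mu == la)%:R) (d := sumn la) coef _)) => mu _ /=.
by case: (eqVneq mu la) => [->|_]; rewrite ?leqnn // eqxx.
Qed.

Lemma sumr_pred1_uniq (R : pzRingType) (T : eqType) (s : seq T) (a : T) (c : R) :
  uniq s -> \sum_(x <- s) (x == a)%:R * c = (a \in s)%:R * c.
Proof.
elim: s => [|x s IH] /=; first by rewrite big_nil mul0r.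
case/andP=> x_s s_uniq; rewrite big_cons IH // in_cons.
by case: (eqVneq x a) => [<-|_]; rewrite ?(negPf x_s) mul0r ?addr0 ?add0r.
Qed.

Lemma mcoeff_Dop p k n (m : 'X_{1..n}) : isSym p ->
  (Dop k p n)@_m = if k == 0%N then 0 else k`!%:R * part_coef p (part_union [:: k] (mpart m)).
Proof.
move=> p_sym; rewrite /Dop raddf_sum /=; set shapes := undup _.
set la_k := part_union [:: k] (mpart m); set c := (X in _ = X).
have m_sorted : sorted geq (mpart m) by case/andP: (is_part_mpart m).
have term la : la \in shapes -> ((p n.+1)@_(mpad n.+1 la) *:
    (if k \in la then k`!%:R *: monomial_sym (rem k la) n else 0))@_m = (la == la_k)%:R * c.
  rewrite mem_undup => /mapP [m' _ ->]; have m'_part := is_part_mpart m'.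
  rewrite mcoeffZ mcoeff_isSym // mpart_mpad ?size_mpart //.
  have [k_la|k_la] := boolP (k \in mpart m'); last first.
    rewrite mcoeff0 mulr0; case: eqP => [m'_k|]; last by rewrite mul0r.
    by rewrite m'_k mem_sort mem_head in k_la.
  rewrite mcoeffZ mcoeff_monomial_sym.
  have -> : (mpart m == rem k (mpart m')) = (mpart m' == la_k).
    by rewrite -(part_union1_rem k m'_part m_sorted) k_la.
  case: eqP => [->|]; last by rewrite !mulr0 mul0r.
  have /negbTE k_neq0 : k != 0%N by case/andP: m'_part => _ /allP /(_ k k_la); rewrite lt0n.
  by rewrite /c k_neq0 mul1r mulr1 mulrC.
rewrite (eq_big_seq _ term) sumr_pred1_uniq ?undup_uniq //.
have [la_shape|la_shape] := boolP (la_k \in shapes); first by rewrite mul1r.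
rewrite mul0r /c; case: eqP => // /eqP k_neq0.
suff -> : part_coef p la_k = 0 by rewrite mulr0.
apply/eqP; apply: contraNT la_shape => la_k_coef; rewrite mem_undup; apply/mapP.
have la_k_part : is_part la_k.
  by apply: is_part_union; [rewrite /= lt0n k_neq0 | case/andP: (is_part_mpart m)].
have la_k_n : (size la_k <= n.+1)%N by rewrite size_part_union ltnS size_mpart.
exists (mpad n.+1 la_k); last by rewrite mpart_mpad.
by rewrite mcoeff_msupp mcoeff_isSym // mpart_mpad.
Qed.

Lemma natr_fact_neq0 k : (k`!%:R : CC) != 0.
Proof. by rewrite (pnatr_eq0 (Rdefinitions.R[i])) -lt0n fact_gt0. Qed.

Lemma isSym_union_shape (p q : fam) (c : CC) la d :
  deg_le p d -> all (fun k => 0 < k)%N la ->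
  (forall n m, (q n)@_m = c * part_coef p (part_union la (mpart m))) ->
  isSym q /\ deg_le q d.
Proof.
move=> p_deg la_pos q_coef.
apply: (isSym_shape (f := fun mu => c * part_coef p (part_union la mu)) q_coef) => mu mu_part.
by rewrite mulf_eq0 negb_or => /andP[_]; apply: part_coef_union_deg.
Qed.

Lemma isSym_Dop p k : isSym p -> isSym (Dop k p).
Proof.
move=> p_sym; have [_ _ [d p_deg]] := p_sym; have [->|k_neq0] := eqVneq k 0%N.
  apply: (proj1 (isSym_shape (f := fun=> 0) (d := 0) _ _)) => [n m|la _].
    by rewrite mcoeff_Dop.
  by rewrite eqxx.
apply: (proj1 (isSym_union_shape (c := k`!%:R) (la := [:: k]) p_deg _ _)).
  by rewrite /= lt0n k_neq0.
by move=> n m; rewrite mcoeff_Dop // (negPf k_neq0).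
Qed.

Lemma Dop_eq0 p d k : isSym p -> deg_le p d -> (d < k)%N -> Dop k p = fam0.
Proof.
move=> p_sym p_deg d_k; have k_pos : (0 < k)%N := leq_ltn_trans (leq0n d) d_k.
apply: famP => n m; rewrite mcoeff_Dop // (negPf (lt0n_neq0 k_pos)) mcoeff0.
have union_part : is_part (part_union [:: k] (mpart m)).
  by apply: is_part_union; [rewrite /= k_pos | case/andP: (is_part_mpart m)].
suff -> : part_coef p (part_union [:: k] (mpart m)) = 0 by rewrite mulr0.
apply/eqP; apply: contraTT d_k => /(part_coef_deg p_deg union_part).
by rewrite -leqNgt sumn_part_union /= addn0; apply: leq_trans; rewrite leq_addr.
Qed.

Lemma mcoeff_Dpart la p : all (fun k => 0 < k)%N la -> isSym p ->
  forall n (m : 'X_{1..n}), (Dpart la p n)@_m = part_coef p (part_union la (mpart m)).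
Proof.
move=> la_pos p_sym; have [_ _ [d p_deg]] := p_sym.
elim: la la_pos => [_ n m|k la IH /andP[k_pos la_pos] n m] /=.
  by rewrite part_union0s ?mcoeff_isSym ?is_part_mpart.
have [Dla_sym _] : isSym (Dpart la p) /\ deg_le (Dpart la p) d.
  by apply: (isSym_union_shape (c := 1) p_deg la_pos) => n' m'; rewrite mul1r IH.
rewrite /famZ mcoeffZ mcoeff_Dop // (negPf (lt0n_neq0 k_pos)) mulrA mulVf ?natr_fact_neq0 // mul1r.
rewrite (part_coef_shape (f := fun mu => part_coef p (part_union la mu)) (IH la_pos)).
  by rewrite part_union_cat.
by apply: is_part_union; [rewrite /= k_pos | case/andP: (is_part_mpart m)].
Qed.

Lemma isSym_Dpart la p d : all (fun k => 0 < k)%N la -> isSym p -> deg_le p d ->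
  isSym (Dpart la p) /\ deg_le (Dpart la p) d.
Proof.
move=> la_pos p_sym p_deg.
by apply: (isSym_union_shape (c := 1) p_deg la_pos) => n m; rewrite mul1r mcoeff_Dpart.
Qed.

Lemma part_coef_Dpart la p mu : all (fun k => 0 < k)%N la -> isSym p -> is_part mu ->
  part_coef (Dpart la p) mu = part_coef p (part_union la mu).
Proof.
move=> la_pos p_sym.
exact: (part_coef_shape (f := fun mu => part_coef p (part_union la mu))
                        (mcoeff_Dpart la_pos p_sym)).
Qed.

(** * Linear combinations and Taylor's formula *)

Definition fsum (I : Type) (s : seq I) (F : I -> fam) : fam :=
  foldr (fun i q => famD (F i) q) fam0 s.

Lemma fsumE (I : Type) (s : seq I) (F : I -> fam) n : fsum s F n = \sum_(i <- s) F i n.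
Proof. by elim: s => [|i s IH] /=; rewrite ?big_nil ?big_cons // /famD IH. Qed.

Lemma isSym_fam0 : isSym fam0.
Proof.
by apply: (proj1 (isSym_shape (f := fun=> 0) (d := 0) _ _)) => [n m|la _]; rewrite ?mcoeff0 ?eqxx.
Qed.

Lemma isSym_famD p q : isSym p -> isSym q -> isSym (famD p q).
Proof.
move=> p_sym q_sym; have [_ _ [dp p_deg]] := p_sym; have [_ _ [dq q_deg]] := q_sym.
have coef n m : (famD p q n)@_m = part_coef p (mpart m) + part_coef q (mpart m).
  by rewrite mcoeffD !mcoeff_isSym.
apply: (proj1 (isSym_shape (f := fun la => part_coef p la + part_coef q la)
  (d := maxn dp dq) coef _)) => la la_part /=.
have [p_la|p_la] := eqVneq (part_coef p la) 0.
  by rewrite p_la add0r leq_max => /(part_coef_deg q_deg la_part) ->; rewrite orbT.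
by rewrite leq_max (part_coef_deg p_deg la_part p_la).
Qed.

Lemma isSym_famZ c p : isSym p -> isSym (famZ c p).
Proof.
move=> p_sym; have [_ _ [d p_deg]] := p_sym.
have coef n m : (famZ c p n)@_m = c * part_coef p (part_union [::] (mpart m)).
  by rewrite mcoeffZ part_union0s ?mcoeff_isSym ?is_part_mpart.
exact: (proj1 (isSym_union_shape p_deg _ coef)).
Qed.

Lemma isSym_fsum (I : Type) (s : seq I) (F : I -> fam) :
  (forall i, isSym (F i)) -> isSym (fsum s F).
Proof. by move=> F_sym; elim: s => [|i s IH]; [apply: isSym_fam0 | apply: isSym_famD]. Qed.

Lemma epsilon_fsumZ (I : Type) (s : seq I) (c : I -> CC) (F : I -> fam) :
  epsilon (fsum s (fun i => famZ (c i) (F i))) = \sum_(i <- s) c i * epsilon (F i).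
Proof.
by rewrite /epsilon fsumE raddf_sum; apply: eq_bigr => i _; rewrite /= mevalZ.
Qed.

Lemma mnm_le_mdeg n (m : 'X_{1..n}) i : (m i <= mdeg m)%N.
Proof. by rewrite mdegE (bigD1 i) //= leq_addr. Qed.

(* [Dop 0] vanishes, so the constant Taylor term is carried by [r] alone. *)
Lemma shiftE_taylor r d K a : isSym r -> deg_le r d -> (d <= K)%N ->
  shiftE a r = famD r (fsum (index_iota 0 K.+1) (fun k => famZ (a ^+ k / k`!%:R) (Dop k r))).
Proof.
move=> r_sym r_deg d_K; apply: famP => n x.
rewrite (@mcoeff_shiftE _ _ _ _ K.+1) => [|m /r_deg m_d]; last first.
  by rewrite ltnS (leq_trans (mnm_le_mdeg m ord0)) // (leq_trans m_d).
rewrite mcoeffD fsumE raddf_sum /= !big_nat_recl // expr0 mul1r mcoeff_isSym //.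
rewrite mpart_mnm_cons eqxx mcoeffZ mcoeff_Dop // eqxx mulr0 add0r -mcoeff_isSym //.
congr (_ + _); apply: eq_bigr => k _.
rewrite mcoeffZ mcoeff_Dop // mcoeff_isSym // mpart_mnm_cons /=.
by rewrite mulrA divfK ?natr_fact_neq0.
Qed.

Lemma sum_powers_eq0 (R : numDomainType) (u : nat -> R) K :
  (forall a : R, \sum_(0 <= k < K) a ^+ k * u k = 0) -> forall k, (k < K)%N -> u k = 0.
Proof.
move=> u_roots k k_K; pose P := \poly_(i < K) u i.
have P0 : P = 0.
  apply: (roots_geq_poly_eq0 (rs := [seq i%:R | i <- iota 0 K])).
  - apply/allP => _ /mapP [i _ ->].
    rewrite /root horner_poly -[X in _ == X](u_roots i%:R) big_mkord.
    by apply/eqP; apply: eq_bigr => j _; rewrite mulrC.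
  - by rewrite map_inj_uniq ?iota_uniq // => i j /eqP; rewrite eqr_nat => /eqP.
  - by rewrite size_map size_iota size_poly.
by have := congr1 (fun q : {poly R} => q`_k) P0; rewrite coef_poly k_K coef0.
Qed.

Lemma mem_partitions_upto N la : (la \in partitions_upto N) = is_part la && (sumn la <= N)%N.
Proof.
apply/idP/andP => [|[la_part la_N]].
  by rewrite mem_undup => /mapP [m _ ->]; rewrite is_part_mpart sumn_mpart -ltnS bmdeg.
have la_size : (size la <= N)%N := leq_trans (size_part_le_sumn la_part) la_N.
have la_bound : (mdeg (mpad N la) < N.+1)%N by rewrite mdeg_mpad.
rewrite mem_undup; apply/mapP; exists (BMultinom la_bound); first by rewrite mem_enum.
by rewrite /= mpart_mpad.
Qed.

Lemma monomial_sym_expansion p N : isSym p -> deg_le p N ->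
  p = fsum (partitions_upto N) (fun la => famZ (part_coef p la) (monomial_sym la)).
Proof.
move=> p_sym p_deg; apply: famP => n m; rewrite fsumE raddf_sum mcoeff_isSym //.
have term la : (la == mpart m)%:R * part_coef p la = (la == mpart m)%:R * part_coef p (mpart m).
  by case: (eqVneq la (mpart m)) => [->|_] //=; rewrite !mul0r.
under eq_bigr => la _ do rewrite /= mcoeffZ mcoeff_monomial_sym eq_sym mulrC term.
rewrite sumr_pred1_uniq ?undup_uniq // mem_partitions_upto is_part_mpart /=.
case: leqP => [_|N_lt]; first by rewrite mul1r.
rewrite mul0r; apply/eqP; apply: contraTT N_lt; rewrite -leqNgt.
exact: part_coef_deg p_deg (is_part_mpart m).
Qed.

(** * Shift-invariant operators *)

Section ShiftInvariantOperator.

Variable theta : fam -> fam.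
Hypothesis theta_sym : forall p, isSym p -> isSym (theta p).
Hypothesis theta_add : forall p q, isSym p -> isSym q ->
  theta (famD p q) = famD (theta p) (theta q).
Hypothesis theta_scale : forall (c : CC) p, isSym p -> theta (famZ c p) = famZ c (theta p).
Hypothesis theta_shift : forall (a : CC) p, isSym p -> theta (shiftE a p) = shiftE a (theta p).

Lemma theta_fam0 : theta fam0 = fam0.
Proof.
have famZ0 p : famZ 0 p = fam0 by apply: famP => n m; rewrite /famZ scale0r.
by rewrite -{1}(famZ0 fam0) theta_scale ?famZ0 //; apply: isSym_fam0.
Qed.

Lemma theta_fsumZ (I : Type) (s : seq I) (c : I -> CC) (F : I -> fam) :
  (forall i, isSym (F i)) ->
  theta (fsum s (fun i => famZ (c i) (F i))) = fsum s (fun i => famZ (c i) (theta (F i))).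
Proof.
move=> F_sym; elim: s => [|i s IH] /=; first exact: theta_fam0.
rewrite theta_add ?theta_scale ?IH //; first exact: isSym_famZ.
by apply: isSym_fsum => j; apply: isSym_famZ.
Qed.

Lemma theta_Dop q k : isSym q -> theta (Dop k q) = Dop k (theta q).
Proof.
move=> q_sym; have tq_sym := theta_sym q_sym.
have [_ _ [dq q_deg]] := q_sym; have [_ _ [dt tq_deg]] := tq_sym.
pose K := maxn dq dt; have [k_K|K_k] := leqP k K; last first.
  rewrite (Dop_eq0 q_sym q_deg) ?(Dop_eq0 tq_sym tq_deg) ?theta_fam0 //.
    by rewrite (leq_ltn_trans _ K_k) ?leq_maxr.
  by rewrite (leq_ltn_trans _ K_k) ?leq_maxl.
apply: famP => n x.
pose u j := ((theta (Dop j q) n)@_x - (Dop j (theta q) n)@_x) / j`!%:R.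
suff /(@sum_powers_eq0 (Rdefinitions.R[i])) /(_ k k_K) /eqP :
    forall a, \sum_(0 <= j < K.+1) a ^+ j * u j = 0.
  by rewrite mulf_eq0 invr_eq0 (negPf (natr_fact_neq0 k)) orbF subr_eq0 => /eqP.
move=> a; have := congr1 (fun f : fam => (f n)@_x) (theta_shift a q_sym).
rewrite (shiftE_taylor a q_sym q_deg (leq_maxl dq dt)).
rewrite (shiftE_taylor a tq_sym tq_deg (leq_maxr dq dt)).
have Dq_sym j : isSym (Dop j q) := isSym_Dop j q_sym.
rewrite theta_add ?theta_fsumZ //; last by apply: isSym_fsum => j; apply: isSym_famZ.
rewrite /famD !fsumE !mcoeffD => /addrI; rewrite !raddf_sum /= => sums_eq.
rewrite (eq_bigr (fun j => (famZ (a ^+ j / j`!%:R) (theta (Dop j q)) n)@_x -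
                           (famZ (a ^+ j / j`!%:R) (Dop j (theta q)) n)@_x)).
  by rewrite sumrB sums_eq subrr.
by move=> j _; rewrite /u /= !mcoeffZ; ring.
Qed.

Lemma theta_Dpart la q : all (fun k => 0 < k)%N la -> isSym q ->
  theta (Dpart la q) = Dpart la (theta q).
Proof.
move=> la_pos q_sym; have [_ _ [d q_deg]] := q_sym.
elim: la la_pos => [|k la IH /andP[_ la_pos]] //=.
have [Dla_sym _] := isSym_Dpart la_pos q_sym q_deg.
by rewrite theta_scale ?theta_Dop ?IH //; apply: isSym_Dop.
Qed.

Lemma epsilon_theta p N : isSym p -> deg_le p N ->
  epsilon (theta p) =
  \sum_(la <- partitions_upto N) epsilon (theta (monomial_sym la)) * part_coef p la.
Proof.
move=> p_sym p_deg; rewrite {1}(monomial_sym_expansion p_sym p_deg).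
rewrite theta_fsumZ ?epsilon_fsumZ; last by move=> la; apply: isSym_monomial_sym.
by apply: eq_bigr => la _; rewrite mulrC.
Qed.

Lemma part_coef_theta p N nu : isSym p -> deg_le p N -> is_part nu ->
  part_coef (theta p) nu =
  \sum_(la <- partitions_upto N) epsilon (theta (monomial_sym la)) * part_coef p (part_union la nu).
Proof.
move=> p_sym p_deg nu_part; have /andP[_ nu_pos] := nu_part.
have [Dp_sym Dp_deg] := isSym_Dpart nu_pos p_sym p_deg.
have coef_nu : part_coef (theta p) nu = epsilon (Dpart nu (theta p)).
  have tp_sym := theta_sym p_sym.
  by rewrite epsilon_part_coef part_coef_Dpart // part_unionC part_union0s.
rewrite coef_nu -theta_Dpart // (epsilon_theta Dp_sym Dp_deg).
apply: eq_big_seq => la; rewrite mem_partitions_upto => /andP[la_part _].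
by rewrite part_coef_Dpart // part_unionC.
Qed.

End ShiftInvariantOperator.

Theorem mainTheorem9 (theta : fam -> fam)
  (theta_sym : forall p, isSym p -> isSym (theta p))
  (theta_add : forall p q, isSym p -> isSym q ->
                 theta (famD p q) = famD (theta p) (theta q))
  (theta_scale : forall (c : CC) p, isSym p -> theta (famZ c p) = famZ c (theta p))
  (theta_shift : forall (a : CC) p, isSym p -> theta (shiftE a p) = shiftE a (theta p)) :
  forall (p : fam) (N : nat), isSym p -> deg_le p N ->
    forall n : nat,
      theta p n =
      \sum_(la <- partitions_upto N)
         epsilon (theta (monomial_sym la)) *: Dpart la p n.
Proof.
move=> p N p_sym p_deg n; apply/mpolyP => x.
rewrite mcoeff_isSym; last exact: theta_sym.
rewrite (part_coef_theta theta_sym theta_add theta_scale theta_shift p_sym p_deg (is_part_mpart x)).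
rewrite raddf_sum; apply: eq_big_seq => la; rewrite mem_partitions_upto => /andP[/andP[_ la_pos] _].
by rewrite /= mcoeffZ mcoeff_Dpart.
Qed.
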